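(* Let $a\ge1$, let $f\colon[a,+\infty)\to\mathbb R$ be continuous with $|f(t)|\le c/t^2$ for all $t\ge a$, where $c>0$ is a real constant. Let $y_1,y_2\colon[a,+\infty)\to\mathbb R$ be $\mathbb R$-linearly independent $\mathcal C^2$ solutions of $y''+fy=0$, and put $y=y_1+y_2i$ and $z=y'/y$ (note $y(t)\ne0$ for all $t\ge a$). Then there is a real $D>0$ with $|z(t)|\le Dt^{2c}$ for all $t\ge a$.
   Context: Differentiability at the endpoint $a$ is understood one-sidedly. *)

From Stdlib Require Import Reals.
From Coquelicot Require Import Coquelicot.
Open Scope R_scope.

Definition halfline (a : R) : R -> Prop := fun s => a <= s.

Definition cont_on_halfline_at (a : R) (g : R -> R) (t : R) : Prop :=
  filterlim g (within (halfline a) (locally t)) (locally (g t)).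

Definition deriv_on_halfline_at (a : R) (g g' : R -> R) (t : R) : Prop :=
  filterlim (fun s => (g s - g t) / (s - t))
    (within (fun s => a <= s /\ s <> t) (locally t)) (locally (g' t)).

Definition C2_on_halfline (a : R) (g dg ddg : R -> R) : Prop :=
  forall t, a <= t ->
    deriv_on_halfline_at a g dg t /\
    deriv_on_halfline_at a dg ddg t /\
    cont_on_halfline_at a ddg t.

From Stdlib Require Import Reals Lra Psatz.
From Coquelicot Require Import Coquelicot.
Open Scope R_scope.

(* Since [z = y'/y] and the Wronskian [w = y1 y2' - y2 y1'] is a nonzero constant
   (nonzero by linear independence and uniqueness for the ODE), the Lagrange identity
   gives [|w| <= |y| |y'|], hence [|z| <= |y'|^2 / |w|].  It remains to bound [|y'|^2]:
   the energy [(|y'|^2 + c |y|^2 / t^2) t^(-2c)] is nonincreasing, because its derivative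
   is minus a positive definite quadratic form in [(y', y/t)] as soon as [|t^2 f| <= c]. *)

Lemma deriv_on_halfline_at_eps a g g' t :
  deriv_on_halfline_at a g g' t -> forall eps, 0 < eps ->
  exists d, 0 < d /\ forall s, a <= s -> s <> t -> Rabs (s - t) < d ->
    Rabs ((g s - g t) / (s - t) - g' t) < eps.
Proof.
  intros H eps Heps.
  destruct (proj1 (filterlim_locally _ _) H (mkposreal eps Heps)) as [[d Hd] Hnear].
  exists d; split; [exact Hd|].
  intros s Has Hst Hs; exact (Hnear s Hs (conj Has Hst)).
Qed.

Lemma cont_on_halfline_at_eps a g :
  cont_on_halfline_at a g a -> forall eps, 0 < eps ->
  exists d, 0 < d /\ forall s, a <= s -> Rabs (s - a) < d -> Rabs (g s - g a) < eps.
Proof.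
  intros H eps Heps.
  destruct (proj1 (filterlim_locally _ _) H (mkposreal eps Heps)) as [[d Hd] Hnear].
  exists d; split; [exact Hd|].
  intros s Has Hs; exact (Hnear s Hs Has).
Qed.

Lemma deriv_on_halfline_at_is_derive a g g' t :
  a < t -> deriv_on_halfline_at a g g' t -> is_derive g t (g' t).
Proof.
  intros Hat H. apply is_derive_Reals. intros eps Heps.
  destruct (deriv_on_halfline_at_eps _ _ _ _ H eps Heps) as [d [Hd Hq]].
  assert (Hm : 0 < Rmin d (t - a)) by (apply Rmin_pos; lra).
  exists (mkposreal _ Hm); simpl. intros h Hh Habs.
  pose proof (Rmin_l d (t - a)); pose proof (Rmin_r d (t - a)).
  specialize (Hq (t + h)). replace (t + h - t) with h in Hq by ring.
  apply Rabs_lt_between in Habs as Hbtw.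
  apply Hq; [lra | lra | lra].
Qed.

(* Near [a] the difference quotient is bounded by [K], so [|g s - g a| <= K |s - a|]. *)
Lemma deriv_on_halfline_at_cont a g g' :
  deriv_on_halfline_at a g g' a -> cont_on_halfline_at a g a.
Proof.
  intros H. apply (proj2 (filterlim_locally _ _)). intros [eps Heps].
  destruct (deriv_on_halfline_at_eps _ _ _ _ H 1 Rlt_0_1) as [d [Hd Hq]].
  set (K := Rabs (g' a) + 1).
  assert (HK : 0 < K) by (unfold K; pose proof (Rabs_pos (g' a)); lra).
  assert (Hm : 0 < Rmin d (eps / K)) by (apply Rmin_pos; [lra | apply Rdiv_lt_0_compat; lra]).
  exists (mkposreal _ Hm). intros s Hs Has. simpl in Hs. unfold halfline in Has.
  change (Rabs (g s - g a) < eps). change (Rabs (s - a) < Rmin d (eps / K)) in Hs.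
  pose proof (Rmin_l d (eps / K)); pose proof (Rmin_r d (eps / K)).
  destruct (Req_dec s a) as [->|Hsa].
  { rewrite Rminus_diag, Rabs_R0; lra. }
  specialize (Hq s Has Hsa ltac:(lra)).
  assert (Hquot : Rabs ((g s - g a) / (s - a)) <= K).
  { replace ((g s - g a) / (s - a)) with ((g s - g a) / (s - a) - g' a + g' a) by ring.
    unfold K. pose proof (Rabs_triang ((g s - g a) / (s - a) - g' a) (g' a)). lra. }
  replace (g s - g a) with ((g s - g a) / (s - a) * (s - a)) by (field; lra).
  rewrite Rabs_mult.
  apply Rle_lt_trans with (K * Rabs (s - a)).
  - apply Rmult_le_compat_r; [apply Rabs_pos | exact Hquot].
  - replace eps with (K * (eps / K)) by (field; lra).
    apply Rmult_lt_compat_l; lra.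
Qed.

Lemma C2_on_halfline_is_derive a g dg ddg t :
  C2_on_halfline a g dg ddg -> a < t ->
  is_derive g t (dg t) /\ is_derive dg t (ddg t).
Proof.
  intros H Hat. destruct (H t ltac:(lra)) as [Hg [Hdg _]].
  split; apply (deriv_on_halfline_at_is_derive a); assumption.
Qed.

Lemma C2_on_halfline_cont a g dg ddg :
  C2_on_halfline a g dg ddg ->
  cont_on_halfline_at a g a /\ cont_on_halfline_at a dg a.
Proof.
  intros H. destruct (H a (Rle_refl a)) as [Hg [Hdg _]].
  split; [exact (deriv_on_halfline_at_cont _ _ _ Hg)
         | exact (deriv_on_halfline_at_cont _ _ _ Hdg)].
Qed.

Lemma C2_solution_interior a (f g dg ddg : R -> R) :
  C2_on_halfline a g dg ddg -> (forall t, a <= t -> ddg t + f t * g t = 0) ->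
  forall t, a < t ->
    is_derive g t (dg t) /\ is_derive dg t (ddg t) /\ ddg t = - f t * g t.
Proof.
  intros Hg Hode t Hat.
  destruct (C2_on_halfline_is_derive a g dg ddg t Hg Hat) as [Hd Hdd].
  split; [exact Hd | split; [exact Hdd |]]. pose proof (Hode t ltac:(lra)). lra.
Qed.

Lemma cont_on_halfline_at_plus a g h :
  cont_on_halfline_at a g a -> cont_on_halfline_at a h a ->
  cont_on_halfline_at a (fun t => g t + h t) a.
Proof.
  intros Hg Hh.
  exact (filterlim_comp_2 _ _ Rplus Hg Hh
           (filterlim_plus (K := R_AbsRing) (V := R_NormedModule) (g a) (h a))).
Qed.

Lemma cont_on_halfline_at_mult a g h :
  cont_on_halfline_at a g a -> cont_on_halfline_at a h a ->
  cont_on_halfline_at a (fun t => g t * h t) a.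
Proof.
  intros Hg Hh.
  exact (filterlim_comp_2 _ _ Rmult Hg Hh (filterlim_mult (K := R_AbsRing) (g a) (h a))).
Qed.

Lemma cont_on_halfline_at_opp a g :
  cont_on_halfline_at a g a -> cont_on_halfline_at a (fun t => - g t) a.
Proof.
  intros Hg.
  exact (filterlim_comp _ _ _ g Ropp _ _ _ Hg
           (filterlim_opp (K := R_AbsRing) (V := R_NormedModule) (g a))).
Qed.

Lemma cont_on_halfline_at_const a k : cont_on_halfline_at a (fun _ => k) a.
Proof. apply filterlim_const. Qed.

Lemma is_derive_cont_on_halfline_at a g l : is_derive g a l -> cont_on_halfline_at a g a.
Proof.
  intros H. eapply filterlim_filter_le_1; [apply filter_le_within |].
  apply (ex_derive_continuous (K := R_AbsRing) (V := R_NormedModule)). now exists l.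
Qed.

Lemma cont_on_halfline_at_ge a b g k :
  cont_on_halfline_at a g a -> a < b -> (forall s, a < s < b -> k <= g s) -> k <= g a.
Proof.
  intros Hc Hab Hk. destruct (Rle_or_lt k (g a)) as [Hle|Hlt]; [exact Hle|].
  destruct (cont_on_halfline_at_eps _ _ Hc (k - g a) ltac:(lra)) as [d [Hd Hnear]].
  set (s := a + Rmin d (b - a) / 2).
  assert (Hm : 0 < Rmin d (b - a)) by (apply Rmin_pos; lra).
  pose proof (Rmin_l d (b - a)); pose proof (Rmin_r d (b - a)).
  assert (Hs : Rabs (g s - g a) < k - g a).
  { apply Hnear; unfold s; [lra|]. rewrite Rabs_right; lra. }
  apply Rabs_lt_between in Hs.
  assert (k <= g s) by (apply Hk; unfold s; lra). lra.
Qed.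

Lemma cont_on_halfline_at_eq a g k :
  cont_on_halfline_at a g a -> (forall s, a < s -> g s = k) -> g a = k.
Proof.
  intros Hc Hk. apply Rle_antisym.
  - assert (- k <= - g a); [|lra].
    apply (cont_on_halfline_at_ge a (a + 1) (fun t => - g t));
      [now apply cont_on_halfline_at_opp | lra |].
    intros s Hs. rewrite Hk; lra.
  - apply (cont_on_halfline_at_ge a (a + 1)); [exact Hc | lra |].
    intros s Hs. rewrite Hk; lra.
Qed.

Lemma is_derive_eq (g : R -> R) (x l l' : R) : is_derive g x l -> l = l' -> is_derive g x l'.
Proof. now intros H <-. Qed.

Lemma is_derive_Rplus (g h : R -> R) (x dg dh : R) :
  is_derive g x dg -> is_derive h x dh -> is_derive (fun t => g t + h t) x (dg + dh).
Proof. exact (is_derive_plus g h x dg dh). Qed.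

Lemma is_derive_Rmult (g h : R -> R) (x dg dh : R) :
  is_derive g x dg -> is_derive h x dh ->
  is_derive (fun t => g t * h t) x (dg * h x + g x * dh).
Proof. intros Hg Hh. exact (is_derive_mult g h x dg dh Hg Hh Rmult_comm). Qed.

Lemma is_derive_Ropp (g : R -> R) (x dg : R) :
  is_derive g x dg -> is_derive (fun t => - g t) x (- dg).
Proof. exact (is_derive_opp g x dg). Qed.

Lemma is_derive_exp_scal (k x : R) : is_derive (fun t => exp (k * t)) x (k * exp (k * x)).
Proof.
  apply (is_derive_comp exp (fun t => k * t) x (exp (k * x)) k); [apply is_derive_exp |].
  apply (is_derive_eq _ _ (k * 1));
    [apply is_derive_scal, (is_derive_id (K := R_AbsRing)) | apply Rmult_1_r].
Qed.

Lemma is_derive_Rpower_const (x e : R) :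
  0 < x -> is_derive (fun t => Rpower t e) x (e * Rpower x e / x).
Proof.
  intros Hx. apply is_derive_Reals.
  replace (e * Rpower x e / x) with (e * Rpower x (e - 1)); [now apply derivable_pt_lim_power|].
  unfold Rminus. rewrite Rpower_plus, Rpower_Ropp, Rpower_1 by exact Hx. field. lra.
Qed.

Lemma is_derive_inv_sqr (x : R) :
  x <> 0 -> is_derive (fun t => / (t * t)) x (- 2 / (x * x * x)).
Proof.
  intros Hx. eapply is_derive_eq.
  - apply (is_derive_inv (fun t => t * t)); [| now apply Rmult_integral_contrapositive].
    apply is_derive_Rmult; apply (is_derive_id (K := R_AbsRing)).
  - unfold one; simpl. field. exact Hx.
Qed.

Lemma deriv_nonpos_nonincreasing a (h h' : R -> R) :
  (forall t, a < t -> is_derive h t (h' t)) -> (forall t, a < t -> h' t <= 0) ->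
  forall s t, a < s -> s <= t -> h t <= h s.
Proof.
  intros Hd Hneg s t Has Hst. destruct (Req_dec s t) as [<-|Hne]; [lra|].
  destruct (MVT_gen h s t h') as [x [Hx Hmvt]].
  - intros x Hx. apply Hd. rewrite Rmin_left in Hx; lra.
  - intros x Hx. rewrite Rmin_left in Hx by lra. apply continuity_pt_filterlim.
    apply (ex_derive_continuous (K := R_AbsRing) (V := R_NormedModule)).
    exists (h' x). apply Hd. lra.
  - rewrite Rmin_left, Rmax_right in Hx by lra.
    assert (h' x <= 0) by (apply Hneg; lra). nra.
Qed.

Lemma deriv_nonpos_le_left_end a (h h' : R -> R) :
  (forall t, a < t -> is_derive h t (h' t)) -> (forall t, a < t -> h' t <= 0) ->
  cont_on_halfline_at a h a -> forall t, a <= t -> h t <= h a.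
Proof.
  intros Hd Hneg Hc t Hat. destruct (Req_dec t a) as [->|Hta]; [lra|].
  apply (cont_on_halfline_at_ge a t); [exact Hc | lra |].
  intros s Hs. apply (deriv_nonpos_nonincreasing a h h'); lra || assumption.
Qed.

Lemma deriv_zero_constant a (h : R -> R) :
  (forall t, a < t -> is_derive h t 0) -> forall s t, a < s -> a < t -> h s = h t.
Proof.
  intros Hd.
  assert (Hmono : forall s t, a < s -> s <= t -> h t = h s).
  { intros s t Has Hst. apply Rle_antisym.
    - apply (deriv_nonpos_nonincreasing a h (fun _ => 0)); auto; intros; lra.
    - assert (- h t <= - h s); [|lra].
      apply (deriv_nonpos_nonincreasing a (fun t => - h t) (fun _ => 0)); auto; [|intros; lra].
      intros x Hx. apply (is_derive_eq _ _ (- 0)); [now apply is_derive_Ropp, Hd | ring]. }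
  intros s t Has Hat. destruct (Rle_or_lt s t).
  - symmetry; now apply Hmono.
  - apply Hmono; lra.
Qed.

(* Gronwall: [V e^(-K t)] is nonincreasing and [V e^(K t)] nondecreasing. *)
Lemma gronwall_zero a K (V V' : R -> R) t0 :
  (forall t, a < t -> is_derive V t (V' t)) ->
  (forall t, a < t -> Rabs (V' t) <= K * V t) ->
  (forall t, a < t -> 0 <= V t) ->
  a < t0 -> V t0 = 0 -> forall t, a < t -> V t = 0.
Proof.
  intros Hd Hgrow Hpos Hat0 HV0 t Hat.
  apply Rle_antisym; [| now apply Hpos].
  destruct (Rle_or_lt t0 t) as [Ht0t|Htt0].
  - assert (Hdec : V t * exp (- K * t) <= V t0 * exp (- K * t0)).
    { apply (deriv_nonpos_nonincreasing a (fun t => V t * exp (- K * t))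
               (fun t => exp (- K * t) * (V' t - K * V t))); auto.
      - intros s Hs. eapply is_derive_eq.
        + apply is_derive_Rmult; [now apply Hd | apply is_derive_exp_scal].
        + cbv beta. ring.
      - intros s Hs. pose proof (exp_pos (- K * s)).
        pose proof (Hgrow s Hs) as Hg. apply Rabs_le_between in Hg.
        apply Rmult_le_0_l; lra. }
    rewrite HV0, Rmult_0_l in Hdec.
    apply (Rmult_le_reg_r (exp (- K * t))); [apply exp_pos | lra].
  - assert (Hinc : - (V t0 * exp (K * t0)) <= - (V t * exp (K * t))).
    { apply (deriv_nonpos_nonincreasing a (fun t => - (V t * exp (K * t)))
               (fun t => - (exp (K * t) * (V' t + K * V t)))); try lra.
      - intros s Hs. eapply is_derive_eq.
        + apply is_derive_Ropp, is_derive_Rmult; [now apply Hd | apply is_derive_exp_scal].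
        + cbv beta. ring.
      - intros s Hs. pose proof (exp_pos (K * s)).
        pose proof (Hgrow s Hs) as Hg. apply Rabs_le_between in Hg.
        assert (0 <= exp (K * s) * (V' s + K * V s)) by (apply Rmult_le_pos; lra). lra. }
    rewrite HV0, Rmult_0_l in Hinc.
    apply (Rmult_le_reg_r (exp (K * t))); [apply exp_pos | lra].
Qed.

Lemma Rabs_2mul_le_sum_sqr x y : 2 * Rabs (x * y) <= x * x + y * y.
Proof.
  rewrite Rabs_mult.
  assert (Hx : Rabs x * Rabs x = x * x) by (rewrite <- Rabs_mult; apply Rabs_right; nra).
  assert (Hy : Rabs y * Rabs y = y * y) by (rewrite <- Rabs_mult; apply Rabs_right; nra).
  pose proof (Rle_0_sqr (Rabs x - Rabs y)); unfold Rsqr in *. nra.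
Qed.

(* Uniqueness for [u'' = - f u] with bounded [f], via the energy [u^2 + u'^2]. *)
Lemma ode_solution_zero a K (f u du ddu : R -> R) t0 :
  (forall t, a < t -> is_derive u t (du t)) ->
  (forall t, a < t -> is_derive du t (ddu t)) ->
  (forall t, a < t -> ddu t = - f t * u t) ->
  (forall t, a < t -> Rabs (f t) <= K) ->
  a < t0 -> u t0 = 0 -> du t0 = 0 -> forall t, a < t -> u t = 0.
Proof.
  intros Hu Hdu Hode Hf Hat0 Hu0 Hdu0 t Hat.
  set (V := fun t => u t * u t + du t * du t).
  assert (HV : V t = 0).
  { apply (gronwall_zero a (1 + K) V (fun t => 2 * (u t * du t) * (1 - f t)) t0); auto.
    - intros s Hs. unfold V. eapply is_derive_eq.
      + apply is_derive_Rplus; apply is_derive_Rmult; auto.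
      + rewrite (Hode s Hs). cbv beta. ring.
    - intros s Hs. unfold V. rewrite Rabs_mult, (Rabs_mult 2), (Rabs_right 2) by lra.
      pose proof (Rabs_2mul_le_sum_sqr (u s) (du s)).
      assert (Rabs (1 - f s) <= 1 + K).
      { pose proof (Hf s Hs) as Hfs. apply Rabs_le_between in Hfs. apply Rabs_le; lra. }
      pose proof (Rabs_pos (1 - f s)). pose proof (Rabs_pos (u s * du s)). nra.
    - intros s Hs. unfold V. nra.
    - unfold V. rewrite Hu0, Hdu0. ring. }
  unfold V in HV. nra.
Qed.

Lemma singular_2x2_kernel (p q r s : R) :
  p * s - q * r = 0 ->
  exists al be, (al <> 0 \/ be <> 0) /\ al * p + be * q = 0 /\ al * r + be * s = 0.
Proof.
  intros Hdet.
  destruct (Req_dec p 0) as [Hp|Hp]; destruct (Req_dec q 0) as [Hq|Hq].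
  - destruct (Req_dec r 0) as [Hr|Hr].
    + exists 1, 0. subst. split; [left; lra | split; ring].
    + exists s, (- r). split; [right; lra | split; nra].
  - exists q, (- p). split; [left; exact Hq | split; nra].
  - exists q, (- p). split; [right; lra | split; nra].
  - exists q, (- p). split; [left; exact Hq | split; nra].
Qed.

Definition energy_form (c g h k : R) : R :=
  2 * c * g * g - 2 * (c - k) * g * h + 2 * c * (c + 1) * h * h.

(* With [m = c - k] in [0, 2c], the discriminant [4 m^2 - 16 c^2 (c + 1)] is negative. *)
Lemma energy_form_nonneg c g h k : 0 < c -> Rabs k <= c -> 0 <= energy_form c g h k.
Proof.
  intros Hc Hk. apply Rabs_le_between in Hk. unfold energy_form.
  set (m := c - k).
  assert (Hm : m * m <= 4 * c * c) by (unfold m; nra).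
  assert (0 <= (2 * c * g - m * h) * (2 * c * g - m * h)) by apply Rle_0_sqr.
  assert (0 <= (4 * c * c * (c + 1) - m * m) * (h * h)) by (apply Rmult_le_pos; nra).
  nra.
Qed.

(* The Lagrange identity [|p|^2 |q|^2 = (q . p)^2 + w^2] gives [|w| <= |p| |q|]. *)
Lemma Cmod_div_le_wronskian (p1 p2 q1 q2 : R) :
  q1 * p2 - q2 * p1 <> 0 ->
  Cmod ((p1, p2) / (q1, q2)) <= (p1 * p1 + p2 * p2) / Rabs (q1 * p2 - q2 * p1).
Proof.
  set (w := q1 * p2 - q2 * p1). intros Hw.
  assert (Hq : (q1, q2) <> RtoC 0)
    by (intros Hq; injection Hq as -> ->; apply Hw; unfold w; ring).
  rewrite Cmod_div by exact Hq.
  set (P := Cmod (p1, p2)). set (Q := Cmod (q1, q2)).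
  assert (HP2 : P * P = p1 * p1 + p2 * p2)
    by (unfold P, Cmod; simpl; rewrite sqrt_sqrt; [ring | nra]).
  assert (HQ2 : Q * Q = q1 * q1 + q2 * q2)
    by (unfold Q, Cmod; simpl; rewrite sqrt_sqrt; [ring | nra]).
  assert (HP : 0 <= P) by apply Cmod_ge_0.
  assert (HQ : 0 <= Q) by apply Cmod_ge_0.
  assert (Hw0 : 0 < Rabs w) by now apply Rabs_pos_lt.
  assert (Hw2 : Rabs w * Rabs w = w * w) by (rewrite <- Rabs_mult; apply Rabs_right; nra).
  assert (Hlag : Rabs w * Rabs w <= (P * Q) * (P * Q)).
  { replace (P * Q * (P * Q)) with ((P * P) * (Q * Q)) by ring.
    rewrite Hw2, HP2, HQ2. unfold w.
    pose proof (Rle_0_sqr (q1 * p1 + q2 * p2)). unfold Rsqr in *. nra. }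
  assert (HwPQ : Rabs w <= P * Q) by (apply Rsqr_incr_0_var; [exact Hlag | nra]).
  assert (HQpos : 0 < Q) by nra.
  rewrite <- HP2. apply (Rmult_le_reg_r (Q * Rabs w)); [nra |].
  replace (P / Q * (Q * Rabs w)) with (P * Rabs w) by (field; lra).
  replace (P * P / Rabs w * (Q * Rabs w)) with (P * (P * Q)) by (field; lra).
  now apply Rmult_le_compat_l.
Qed.

Definition wronskian (u1 du1 u2 du2 : R -> R) (t : R) : R :=
  u1 t * du2 t - u2 t * du1 t.

Definition weighted_energy (c : R) (u1 du1 u2 du2 : R -> R) (t : R) : R :=
  (du1 t * du1 t + du2 t * du2 t + c * (u1 t * u1 t + u2 t * u2 t) / (t * t))
  * Rpower t (- (2 * c)).

Lemma weighted_energy_nonneg c u1 du1 u2 du2 t :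
  0 <= c -> 0 < t -> 0 <= weighted_energy c u1 du1 u2 du2 t.
Proof.
  intros Hc Ht. unfold weighted_energy.
  apply Rmult_le_pos; [| left; apply exp_pos].
  assert (0 <= c * (u1 t * u1 t + u2 t * u2 t) / (t * t)).
  { apply Rdiv_le_0_compat; [apply Rmult_le_pos; nra | nra]. }
  nra.
Qed.

Section SecondOrderSolutions.

Variables (a c : R) (f y1 dy1 ddy1 y2 dy2 ddy2 : R -> R).
Hypotheses (ha : 1 <= a) (hc : 0 < c)
  (hf_bound : forall t, a <= t -> Rabs (f t) <= c / (t ^ 2))
  (hy1 : C2_on_halfline a y1 dy1 ddy1)
  (hy2 : C2_on_halfline a y2 dy2 ddy2)
  (hode1 : forall t, a <= t -> ddy1 t + f t * y1 t = 0)
  (hode2 : forall t, a <= t -> ddy2 t + f t * y2 t = 0)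
  (hindep : forall al be : R,
      (forall t, a <= t -> al * y1 t + be * y2 t = 0) -> al = 0 /\ be = 0).

Let sol1 := C2_solution_interior a f y1 dy1 ddy1 hy1 hode1.
Let sol2 := C2_solution_interior a f y2 dy2 ddy2 hy2 hode2.
Let W := wronskian y1 dy1 y2 dy2.
Let G := weighted_energy c y1 dy1 y2 dy2.

Lemma scaled_coefficient_bound t : a < t -> Rabs (t * t * f t) <= c.
Proof.
  intros Hat. pose proof (hf_bound t ltac:(lra)) as Hf.
  rewrite Rabs_mult, (Rabs_right (t * t)) by nra.
  replace c with (t * t * (c / t ^ 2)) by (field; lra).
  apply Rmult_le_compat_l; [nra | exact Hf].
Qed.

Lemma coefficient_bound t : a < t -> Rabs (f t) <= c.
Proof.
  intros Hat. pose proof (scaled_coefficient_bound t Hat) as Hf.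
  rewrite Rabs_mult, (Rabs_right (t * t)) in Hf by nra.
  assert (1 <= t * t) by nra.
  assert (0 <= (t * t - 1) * Rabs (f t)) by (apply Rmult_le_pos; [lra | apply Rabs_pos]).
  nra.
Qed.

Lemma wronskian_constant t : a <= t -> W t = W (a + 1).
Proof.
  assert (Hconst : forall s, a < s -> W s = W (a + 1)).
  { intros s Has. apply (deriv_zero_constant a W); [| lra | lra].
    intros x Hx.
    destruct (sol1 x Hx) as (D1 & DD1 & O1), (sol2 x Hx) as (D2 & DD2 & O2).
    eapply is_derive_eq.
    - apply is_derive_Rplus; [| apply is_derive_Ropp]; apply is_derive_Rmult; eassumption.
    - rewrite O1, O2. ring. }
  intros Hat. destruct (Req_dec t a) as [->|Hta]; [| apply Hconst; lra].
  apply cont_on_halfline_at_eq; [| exact Hconst].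
  destruct (C2_on_halfline_cont _ _ _ _ hy1) as [C1 CD1].
  destruct (C2_on_halfline_cont _ _ _ _ hy2) as [C2 CD2].
  apply cont_on_halfline_at_plus; [| apply cont_on_halfline_at_opp];
    apply cont_on_halfline_at_mult; assumption.
Qed.

(* A vanishing Wronskian gives a combination [u] of [y1], [y2] with [u = u' = 0] at one point. *)
Lemma wronskian_neq0 : W (a + 1) <> 0.
Proof.
  intros HW.
  destruct (singular_2x2_kernel (y1 (a + 1)) (y2 (a + 1)) (dy1 (a + 1)) (dy2 (a + 1)) HW)
    as (al & be & Hnz & Hu0 & Hdu0).
  set (u := fun t => al * y1 t + be * y2 t).
  assert (Hzero : forall t, a < t -> u t = 0).
  { apply (ode_solution_zero a c f u (fun t => al * dy1 t + be * dy2 t)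
             (fun t => al * ddy1 t + be * ddy2 t) (a + 1)); try lra; try assumption.
    - intros t Hat. destruct (sol1 t Hat) as (D1 & _ & _), (sol2 t Hat) as (D2 & _ & _).
      apply is_derive_Rplus; apply is_derive_scal; assumption.
    - intros t Hat. destruct (sol1 t Hat) as (_ & DD1 & _), (sol2 t Hat) as (_ & DD2 & _).
      apply is_derive_Rplus; apply is_derive_scal; assumption.
    - intros t Hat. destruct (sol1 t Hat) as (_ & _ & O1), (sol2 t Hat) as (_ & _ & O2).
      unfold u. rewrite O1, O2. ring.
    - exact coefficient_bound. }
  assert (Hua : u a = 0).
  { apply cont_on_halfline_at_eq; [| exact Hzero].
    destruct (C2_on_halfline_cont _ _ _ _ hy1) as [C1 _].
    destruct (C2_on_halfline_cont _ _ _ _ hy2) as [C2 _].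
    apply cont_on_halfline_at_plus; apply cont_on_halfline_at_mult;
      (apply cont_on_halfline_at_const || assumption). }
  destruct (hindep al be) as [-> ->]; [| lra].
  intros t Hat. destruct (Req_dec t a) as [->|Hta]; [exact Hua | apply Hzero; lra].
Qed.

(* The weight [t^(-2c)] is chosen so that [G'] is [-t^(-2c-1)] times two copies of
   [energy_form], evaluated at [(y_i', y_i / t)] with [k = t^2 f]. *)
Lemma weighted_energy_derive t : a < t ->
  is_derive G t (- (Rpower t (- (2 * c)) / t) *
    (energy_form c (dy1 t) (y1 t / t) (t * t * f t)
     + energy_form c (dy2 t) (y2 t / t) (t * t * f t))).
Proof.
  intros Hat.
  destruct (sol1 t Hat) as (D1 & DD1 & O1), (sol2 t Hat) as (D2 & DD2 & O2).
  unfold G, weighted_energy, Rdiv at 1. eapply is_derive_eq.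
  - apply is_derive_Rmult; [| apply is_derive_Rpower_const; lra].
    apply is_derive_Rplus; [apply is_derive_Rplus; apply is_derive_Rmult; eassumption |].
    apply is_derive_Rmult; [| apply is_derive_inv_sqr; lra].
    apply (is_derive_scal (fun s => y1 s * y1 s + y2 s * y2 s)).
    apply is_derive_Rplus; apply is_derive_Rmult; eassumption.
  - rewrite O1, O2. unfold energy_form. field. lra.
Qed.

Lemma weighted_energy_le : forall t, a <= t -> G t <= G a.
Proof.
  apply (deriv_nonpos_le_left_end a G _ weighted_energy_derive).
  - intros t Hat.
    pose proof (energy_form_nonneg c (dy1 t) (y1 t / t) (t * t * f t) hc
                  (scaled_coefficient_bound t Hat)).
    pose proof (energy_form_nonneg c (dy2 t) (y2 t / t) (t * t * f t) hc
                  (scaled_coefficient_bound t Hat)).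
    assert (0 < Rpower t (- (2 * c)) / t) by (apply Rdiv_lt_0_compat; [apply exp_pos | lra]).
    nra.
  - destruct (C2_on_halfline_cont _ _ _ _ hy1) as [C1 CD1].
    destruct (C2_on_halfline_cont _ _ _ _ hy2) as [C2 CD2].
    assert (Cinv : cont_on_halfline_at a (fun s => / (s * s)) a).
    { eapply is_derive_cont_on_halfline_at, is_derive_inv_sqr. lra. }
    assert (Cpow : cont_on_halfline_at a (fun s => Rpower s (- (2 * c))) a).
    { eapply is_derive_cont_on_halfline_at, is_derive_Rpower_const. lra. }
    unfold G, weighted_energy, Rdiv.
    apply cont_on_halfline_at_mult; [| exact Cpow].
    apply cont_on_halfline_at_plus;
      [apply cont_on_halfline_at_plus; apply cont_on_halfline_at_mult; assumption |].
    apply cont_on_halfline_at_mult; [| exact Cinv].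
    apply cont_on_halfline_at_mult; [apply cont_on_halfline_at_const |].
    apply cont_on_halfline_at_plus; apply cont_on_halfline_at_mult; assumption.
Qed.

Lemma derivative_sqr_bound t : a <= t ->
  dy1 t * dy1 t + dy2 t * dy2 t <= G a * Rpower t (2 * c).
Proof.
  intros Hat.
  assert (Hweight : Rpower t (- (2 * c)) * Rpower t (2 * c) = 1).
  { rewrite <- Rpower_plus, Rplus_opp_l. apply Rpower_O. lra. }
  assert (HG : G t * Rpower t (2 * c)
               = dy1 t * dy1 t + dy2 t * dy2 t + c * (y1 t * y1 t + y2 t * y2 t) / (t * t)).
  { unfold G, weighted_energy. rewrite Rmult_assoc, Hweight. ring. }
  assert (0 <= c * (y1 t * y1 t + y2 t * y2 t) / (t * t)).
  { apply Rdiv_le_0_compat; [apply Rmult_le_pos; nra | nra]. }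
  assert (G t * Rpower t (2 * c) <= G a * Rpower t (2 * c)).
  { apply Rmult_le_compat_r; [left; apply exp_pos | now apply weighted_energy_le]. }
  lra.
Qed.

End SecondOrderSolutions.

Theorem mainTheorem18 (a c : R) (f y1 dy1 ddy1 y2 dy2 ddy2 : R -> R)
  (ha : 1 <= a) (hc : 0 < c)
  (hf_cont : forall t, a <= t -> cont_on_halfline_at a f t)
  (hf_bound : forall t, a <= t -> Rabs (f t) <= c / (t ^ 2))
  (hy1 : C2_on_halfline a y1 dy1 ddy1)
  (hy2 : C2_on_halfline a y2 dy2 ddy2)
  (hode1 : forall t, a <= t -> ddy1 t + f t * y1 t = 0)
  (hode2 : forall t, a <= t -> ddy2 t + f t * y2 t = 0)
  (hindep : forall al be : R,
      (forall t, a <= t -> al * y1 t + be * y2 t = 0) -> al = 0 /\ be = 0) :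
  let y : R -> C := fun t => (y1 t, y2 t) in
  let dy : R -> C := fun t => (dy1 t, dy2 t) in
  let z : R -> C := fun t => Cdiv (dy t) (y t) in
  exists D : R, 0 < D /\
    forall t, a <= t -> Cmod (z t) <= D * Rpower t (2 * c).
Proof.
  intros y dy z.
  set (W0 := wronskian y1 dy1 y2 dy2 (a + 1)).
  set (M := weighted_energy c y1 dy1 y2 dy2 a).
  assert (HW0 : W0 <> 0) by (eapply wronskian_neq0; eassumption).
  assert (HW0abs : 0 < Rabs W0) by now apply Rabs_pos_lt.
  assert (HM : 0 <= M) by (apply weighted_energy_nonneg; lra).
  exists (M / Rabs W0 + 1). split.
  - assert (0 <= M / Rabs W0) by (apply Rdiv_le_0_compat; lra). lra.
  - intros t Hat.
    assert (HWt : wronskian y1 dy1 y2 dy2 t = W0)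
      by (eapply wronskian_constant; eassumption).
    pose proof (Cmod_div_le_wronskian (dy1 t) (dy2 t) (y1 t) (y2 t)) as Hz.
    unfold wronskian in HWt. rewrite HWt in Hz.
    assert (Hdy : dy1 t * dy1 t + dy2 t * dy2 t <= M * Rpower t (2 * c))
      by (eapply derivative_sqr_bound; eassumption).
    assert (Hpow : 0 < Rpower t (2 * c)) by apply exp_pos.
    eapply Rle_trans; [exact (Hz HW0) |].
    apply Rle_trans with (M * Rpower t (2 * c) / Rabs W0).
    + apply Rmult_le_compat_r; [left; now apply Rinv_0_lt_compat | exact Hdy].
    + replace (M * Rpower t (2 * c) / Rabs W0) with (M / Rabs W0 * Rpower t (2 * c))
        by (field; lra).
      apply Rmult_le_compat_r; lra.
Qed.
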